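(* Let $\kappa$ be an infinite cardinal and let $X$ be a crowded Hausdorff Baire space which is $\omega_1$-expandable and satisfies $dis^*(X)\leq\kappa$. If $A\subseteq X$ and $|A|\leq\kappa$, then $|\overline{A}|\leq\kappa$.
   Context: All spaces are Hausdorff. A space is crowded if it has no isolated points. $dis^*(X)$ is the least number of closed discrete subsets needed to cover $X$. For a collection $\mathcal{G}$ of subsets of $X$, $ord(x,\mathcal{G})=|\{G\in\mathcal{G}:x\in G\}|$. For a cardinal $\lambda$, $X$ is $\lambda$-expandable if for every closed discrete set $D\subseteq X$ there is a family $\mathcal{G}=\{U_d: d\in D\}$ of open sets with $U_d\cap D=\{d\}$ for each $d\in D$ and $ord(x,\mathcal{G})\leq\lambda$ for every $x\in X$. *)

From Stdlib Require Import Classical.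

Set Implicit Arguments.

Record topology (X : Type) := Topology {
  open : (X -> Prop) -> Prop;
  open_full : open (fun _ => True);
  open_inter : forall U V, open U -> open V -> open (fun x => U x /\ V x);
  open_union : forall (F : (X -> Prop) -> Prop),
      (forall U, F U -> open U) -> open (fun x => exists U, F U /\ U x)
}.

Section Topo.
Variables (X : Type) (T : topology X).

Definition closed (C : X -> Prop) : Prop := open T (fun x => ~ C x).

Definition closure (A : X -> Prop) : X -> Prop :=
  fun x => forall U, open T U -> U x -> exists y, U y /\ A y.

Definition hausdorff : Prop :=
  forall x y, x <> y -> exists U V, open T U /\ open T V /\ U x /\ V y /\
    (forall z, ~ (U z /\ V z)).

Definition isolated (x : X) : Prop := open T (fun y => y = x).
Definition crowded : Prop := forall x, ~ isolated x.

Definition dense (D : X -> Prop) : Prop :=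
  forall U, open T U -> (exists x, U x) -> exists y, U y /\ D y.

Definition baire : Prop :=
  forall G : nat -> X -> Prop,
    (forall n, open T (G n)) -> (forall n, dense (G n)) ->
    dense (fun x => forall n, G n x).

Definition discrete (D : X -> Prop) : Prop :=
  forall x, D x -> exists U, open T U /\ (forall y, (U y /\ D y) <-> y = x).

Definition closed_discrete (D : X -> Prop) : Prop := closed D /\ discrete D.
End Topo.

Definition card_le (X : Type) (S : X -> Prop) (K : Type) : Prop :=
  exists f : X -> K, forall x y, S x -> S y -> f x = f y -> x = y.

Definition infinite_type (K : Type) : Prop :=
  exists f : nat -> K, forall m n, f m = f n -> m = n.

Definition countable_set (X : Type) (S : X -> Prop) : Prop := card_le S nat.

(* |S| <= aleph_1 : S carries a well-order all of whose proper initial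
   segments are countable (i.e. S has order type <= omega_1). *)
Definition le_aleph1 (X : Type) (S : X -> Prop) : Prop :=
  exists R : X -> X -> Prop,
    (forall x, S x -> ~ R x x) /\
    (forall x y z, S x -> S y -> S z -> R x y -> R y z -> R x z) /\
    (forall x y, S x -> S y -> R x y \/ x = y \/ R y x) /\
    (forall P : X -> Prop, (forall x, P x -> S x) -> (exists x, P x) ->
        exists m, P m /\ forall y, P y -> ~ R y m) /\
    (forall s, S s -> countable_set (fun t => S t /\ R t s)).

Definition dis_star_le (X : Type) (T : topology X) (K : Type) : Prop :=
  exists C : K -> X -> Prop,
    (forall k, closed_discrete T (C k)) /\ (forall x, exists k, C k x).

Definition omega1_expandable (X : Type) (T : topology X) : Prop :=
  forall D : X -> Prop, closed_discrete T D ->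
    exists U : X -> X -> Prop,
      (forall d, D d -> open T (U d) /\ (forall y, (U d y /\ D y) <-> y = d)) /\
      (forall x, le_aleph1 (fun d => D d /\ U d x)).

(* Cover X by closed discrete sets C_k (k ∈ κ).  Each
   D_k = C_k ∩ cl(A) is closed discrete; expandability gives open U_d ∋ d
   (d ∈ D_k) separating D_k, every point lying in at most ℵ₁ of them.  Picking
   a(d) ∈ A ∩ U_d, every fibre of a : D_k → A lies in {d | a ∈ U_d}, of size
   ≤ ℵ₁.  As X is crowded and Baire, the complements of the C_k are dense open,
   so κ is uncountable and ℵ₁ ≤ κ.  Hence |cl(A)| ≤ κ·κ·κ = κ. *)

From Stdlib Require Import Classical ClassicalEpsilon FunctionalExtensionality
  PropExtensionality Cantor.
From mathcomp Require classical_sets.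
Set Bullet Behavior "Strict Subproofs".

Definition incl {Y} (M N : Y -> Prop) : Prop := forall y, M y -> N y.

Definition chain {Y} (C : (Y -> Prop) -> Prop) : Prop :=
  forall M N, C M -> C N -> incl M N \/ incl N M.

Definition Union {Y} (C : (Y -> Prop) -> Prop) : Y -> Prop :=
  fun y => exists M, C M /\ M y.

Definition inj_on {A B} (S : A -> Prop) (f : A -> B) : Prop :=
  forall x y, S x -> S y -> f x = f y -> x = y.

Definition inj_into {A B} (P : A -> Prop) (Q : B -> Prop) (f : A -> B) : Prop :=
  (forall a, P a -> Q (f a)) /\ inj_on P f.

Lemma set_ext {Y} (M N : Y -> Prop) : incl M N -> incl N M -> M = N.
Proof.
  intros HMN HNM. apply functional_extensionality; intro y.
  apply propositional_extensionality; split; auto.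
Qed.

Lemma choice_on {A B} (P : A -> Prop) (R : A -> B -> Prop) (dflt : A -> B) :
  (forall a, P a -> exists b, R a b) -> exists f : A -> B, forall a, P a -> R a (f a).
Proof.
  intro H. apply (choice (fun a b => P a -> R a b)). intro a.
  destruct (classic (P a)) as [Ha | Ha].
  - destruct (H a Ha) as [b Hb]. exists b; auto.
  - exists (dflt a). intro; contradiction.
Qed.

Lemma left_inverse_on {A B} (a0 : A) (S : A -> Prop) (h : A -> B) :
  inj_on S h -> exists r : B -> A, forall s, S s -> r (h s) = s.
Proof.
  intro h_inj.
  destruct (choice_on (fun y => exists s, S s /\ h s = y) (fun y s => S s /\ h s = y)
              (fun _ => a0)) as [r Hr]; [tauto |].
  exists r. intros s Ss. destruct (Hr (h s) (ex_intro _ s (conj Ss eq_refl))) as [Srs E].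
  exact (h_inj _ _ Srs Ss E).
Qed.

(* Zorn's lemma for a family of sets containing some [b] and closed under
   unions of nonempty chains, derived from the library version, which also
   requires closure under the (empty) union of the empty chain. *)
Lemma zorn_above {Y} (F : (Y -> Prop) -> Prop) (b : Y -> Prop) :
  F b ->
  (forall C, (forall M, C M -> F M) -> (exists M, C M) -> chain C -> F (Union C)) ->
  exists M, F M /\ forall M', F M' -> incl M M' -> incl M' M.
Proof.
  intros Fb Fchain.
  set (P := fun N : Y -> Prop => F N \/ forall y, ~ N y).
  destruct (@classical_sets.Zorn_bigcup Y P) as [A [PA Amax]].
  - intros C CP Ctot.
    set (C' := fun M => C M /\ F M).
    destruct (classic (exists M, C' M)) as [HC' | HC'].
    + left. replace (classical_sets.bigcup C (fun X => X)) with (Union C').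
      * apply Fchain; [intros M [_ FM]; exact FM | exact HC' |].
        intros M N [CM _] [CN _]. exact (Ctot M N CM CN).
      * apply set_ext.
        -- intros y [M [[CM _] My]]. exists M; auto.
        -- intros y [M CM My]. exists M. split; auto. split; auto.
           destruct (CP M CM) as [FM | Mempty]; [exact FM | destruct (Mempty y My)].
    + right. intros y [M CM My]. apply HC'. exists M. split; auto.
      destruct (CP M CM) as [FM | Mempty]; [exact FM | destruct (Mempty y My)].
  - assert (FA : F A).
    { destruct PA as [FA | Aempty]; [exact FA |].
      destruct (classic (incl b A)) as [bA | bA].
      - replace A with b; [exact Fb |]. apply set_ext; [exact bA |].
        intros y Ay; destruct (Aempty y Ay).
      - exfalso. apply (Amax b); [| left; exact Fb].
        split; [intros y Ay; destruct (Aempty y Ay) | exact bA]. }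
    exists A. split; [exact FA |]. intros M' FM' AM'.
    apply NNPP; intro M'A. apply (Amax M'); [split; auto | left; exact FM'].
Qed.

Section Matchings.
Context {A B : Type} (P : A -> Prop) (Q : B -> Prop).

Definition matching (R : A * B -> Prop) : Prop :=
  (forall a b, R (a, b) -> P a /\ Q b) /\
  (forall a b b', R (a, b) -> R (a, b') -> b = b') /\
  (forall a a' b, R (a, b) -> R (a', b) -> a = a').

Lemma matching_chain_union C :
  (forall R, C R -> matching R) -> chain C -> matching (Union C).
Proof.
  intros HC Cchain. split; [| split].
  - intros a b [R [CR Rab]]. exact (proj1 (HC R CR) a b Rab).
  - intros a b b' [R [CR Rab]] [R' [CR' Rab']].
    destruct (Cchain R R' CR CR') as [RR' | R'R].
    + exact (proj1 (proj2 (HC R' CR')) a b b' (RR' _ Rab) Rab').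
    + exact (proj1 (proj2 (HC R CR)) a b b' Rab (R'R _ Rab')).
  - intros a a' b [R [CR Rab]] [R' [CR' Ra'b]].
    destruct (Cchain R R' CR CR') as [RR' | R'R].
    + exact (proj2 (proj2 (HC R' CR')) a a' b (RR' _ Rab) Ra'b).
    + exact (proj2 (proj2 (HC R CR)) a a' b Rab (R'R _ Ra'b)).
Qed.

Lemma matching_extend R a1 b1 :
  matching R -> P a1 -> Q b1 ->
  (forall b, ~ R (a1, b)) -> (forall a, ~ R (a, b1)) ->
  matching (fun p => R p \/ p = (a1, b1)).
Proof.
  intros [Rdom [Rfun Rinj]] Pa1 Qb1 a1free b1free. split; [| split].
  - intros a b [Rab | E]; [auto |]. injection E; intros; subst; auto.
  - intros a b b' [Rab | E] [Rab' | E']; try (injection E; intros; subst);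
      try (injection E'; intros; subst);
      solve [eauto | exfalso; eapply a1free; eauto | exfalso; eapply b1free; eauto].
  - intros a a' b [Rab | E] [Ra'b | E']; try (injection E; intros; subst);
      try (injection E'; intros; subst);
      solve [eauto | exfalso; eapply a1free; eauto | exfalso; eapply b1free; eauto].
Qed.

Lemma matching_total_inj R (b0 : B) :
  matching R -> (forall a, P a -> exists b, R (a, b)) -> exists f, inj_into P Q f.
Proof.
  intros [Rdom [_ Rinj]] Rtotal.
  destruct (choice_on P (fun a b => R (a, b)) (fun _ => b0) Rtotal) as [f Hf].
  exists f. split.
  - intros a Pa. exact (proj2 (Rdom a (f a) (Hf a Pa))).
  - intros a a' Pa Pa' E. apply (Rinj a a' (f a) (Hf a Pa)). rewrite E. auto.
Qed.
End Matchings.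

Lemma matching_converse {A B} (P : A -> Prop) (Q : B -> Prop) R :
  matching P Q R -> matching Q P (fun p => R (snd p, fst p)).
Proof.
  intros [Rdom [Rfun Rinj]]. split; [| split]; simpl.
  - intros b a Rab. destruct (Rdom a b Rab); auto.
  - intros b a a' Rab Ra'b. exact (Rinj a a' b Rab Ra'b).
  - intros b b' a Rab Rab'. exact (Rfun a b b' Rab Rab').
Qed.

(* Comparability of cardinalities: a maximal matching is total on one side. *)
Theorem card_comparable {A B} (a0 : A) (b0 : B) (P : A -> Prop) (Q : B -> Prop) :
  (exists f, inj_into P Q f) \/ (exists g, inj_into Q P g).
Proof.
  destruct (zorn_above (matching P Q) (fun _ => False)) as [R [Rmatch Rmax]].
  - split; [| split]; intros; contradiction.
  - intros C HC _ Cchain. exact (matching_chain_union P Q C HC Cchain).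
  - destruct (classic (forall a, P a -> exists b, R (a, b))) as [Rleft | Rleft].
    { left. exact (matching_total_inj P Q R b0 Rmatch Rleft). }
    destruct (classic (forall b, Q b -> exists a, R (a, b))) as [Rright | Rright].
    { right. apply (matching_total_inj Q P _ a0 (matching_converse P Q R Rmatch)).
      intros b Qb. destruct (Rright b Qb) as [a Rab]. exists a. exact Rab. }
    exfalso.
    apply not_all_ex_not in Rleft as [a1 Ha1]. apply imply_to_and in Ha1 as [Pa1 a1free].
    apply not_all_ex_not in Rright as [b1 Hb1]. apply imply_to_and in Hb1 as [Qb1 b1free].
    assert (Rext := matching_extend P Q R a1 b1 Rmatch Pa1 Qb1
                     (fun b Rab => a1free (ex_intro _ b Rab))
                     (fun a Rab => b1free (ex_intro _ a Rab))).
    apply a1free. exists b1.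
    apply (Rmax _ Rext); [intros p Rp; left; exact Rp | right; reflexivity].
Qed.

Section PairingGraphs.
Context {K : Type}.

(* A pairing graph [M] is the graph {(x, y, g x y)} of an injection
   g : S × S → S, where S = [dom M] is recovered from the diagonal. *)
Definition dom (M : K * K * K -> Prop) (x : K) : Prop := exists z, M (x, x, z).

Definition pairing_graph (M : K * K * K -> Prop) : Prop :=
  (forall x y z, M (x, y, z) -> dom M x /\ dom M y /\ dom M z) /\
  (forall x y, dom M x -> dom M y -> exists z, M (x, y, z)) /\
  (forall x y z z', M (x, y, z) -> M (x, y, z') -> z = z') /\
  (forall x y z x' y', M (x, y, z) -> M (x', y', z) -> x = x' /\ y = y').

Lemma dom_union C x : dom (Union C) x -> exists M, C M /\ dom M x.
Proof. intros [z [M [CM Mxxz]]]. exists M. split; [exact CM | exists z; exact Mxxz]. Qed.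

Lemma pairing_graph_chain_union C :
  (forall M, C M -> pairing_graph M) -> chain C -> pairing_graph (Union C).
Proof.
  intros HC Cchain.
  assert (dom_mono : forall M N x, incl M N -> dom M x -> dom N x)
    by (intros M N x MN [z Mz]; exists z; exact (MN _ Mz)).
  split; [| split; [| split]].
  - intros x y z [M [CM Mxyz]].
    destruct (proj1 (HC M CM) x y z Mxyz) as [Dx [Dy Dz]].
    assert (MU : incl M (Union C)) by (intros p Mp; exists M; auto).
    split; [| split]; eapply dom_mono; eauto.
  - intros x y Dx Dy.
    destruct (dom_union C x Dx) as [M [CM DMx]]. destruct (dom_union C y Dy) as [N [CN DNy]].
    destruct (Cchain M N CM CN) as [MN | NM].
    + destruct (proj1 (proj2 (HC N CN)) x y (dom_mono M N x MN DMx) DNy) as [z Nz].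
      exists z, N; auto.
    + destruct (proj1 (proj2 (HC M CM)) x y DMx (dom_mono N M y NM DNy)) as [z Mz].
      exists z, M; auto.
  - intros x y z z' [M [CM Mz]] [N [CN Nz']].
    destruct (Cchain M N CM CN) as [MN | NM].
    + exact (proj1 (proj2 (proj2 (HC N CN))) x y z z' (MN _ Mz) Nz').
    + exact (proj1 (proj2 (proj2 (HC M CM))) x y z z' Mz (NM _ Nz')).
  - intros x y z x' y' [M [CM Mz]] [N [CN Nz]].
    destruct (Cchain M N CM CN) as [MN | NM].
    + exact (proj2 (proj2 (proj2 (HC N CN))) x y z x' y' (MN _ Mz) Nz).
    + exact (proj2 (proj2 (proj2 (HC M CM))) x y z x' y' Mz (NM _ Nz)).
Qed.

Lemma pairing_graph_fun (M : K * K * K -> Prop) :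
  pairing_graph M -> exists g : K -> K -> K, forall x y, dom M x -> dom M y -> M (x, y, g x y).
Proof.
  intros [_ [M_total _]].
  destruct (choice_on (fun p : K * K => dom M (fst p) /\ dom M (snd p))
              (fun p z => M (fst p, snd p, z)) snd) as [g0 Hg0].
  { intros [x y] [Dx Dy]. exact (M_total x y Dx Dy). }
  exists (fun x y => g0 (x, y)). intros x y Dx Dy. exact (Hg0 (x, y) (conj Dx Dy)).
Qed.
End PairingGraphs.

Lemma to_nat_inj p q : to_nat p = to_nat q -> p = q.
Proof. intro E. rewrite <- (cancel_of_to p), <- (cancel_of_to q), E. reflexivity. Qed.

Section NatGraph.
Context {K : Type} (e : nat -> K).
Hypothesis e_inj : forall m n, e m = e n -> m = n.

(* The Cantor pairing of ℕ transported along [e]: the seed of Hessenberg's argument. *)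
Definition nat_graph : K * K * K -> Prop :=
  fun t => exists m n, t = (e m, e n, e (to_nat (m, n))).

Lemma nat_graph_dom x : dom nat_graph x <-> exists m, x = e m.
Proof.
  split.
  - intros [z [m [n E]]]. injection E; intros. exists m; auto.
  - intros [m ->]. exists (e (to_nat (m, m))), m, m. reflexivity.
Qed.

Lemma nat_graph_pairing : pairing_graph nat_graph.
Proof.
  split; [| split; [| split]].
  - intros x y z [m [n E]]. injection E as -> -> ->.
    split; [| split]; apply nat_graph_dom; eauto.
  - intros x y [m ->]%nat_graph_dom [n ->]%nat_graph_dom. exists (e (to_nat (m, n))), m, n.
    reflexivity.
  - intros x y z z' [m [n E]] [m' [n' E']].
    injection E as -> -> ->. injection E' as Em En ->.
    apply e_inj in Em, En. subst. reflexivity.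
  - intros x y z x' y' [m [n E]] [m' [n' E']].
    assert (Emn : (m, n) = (m', n')).
    { apply to_nat_inj, e_inj.
      pose proof (f_equal snd E) as Ez. pose proof (f_equal snd E') as Ez'.
      cbn [snd] in Ez, Ez'. congruence. }
    injection Emn as -> ->. rewrite <- E' in E. injection E as -> ->. split; reflexivity.
Qed.
End NatGraph.

Section PairingFunction.
Context {K : Type}.
Variable M : K * K * K -> Prop.
Hypothesis M_pairing : pairing_graph M.
Local Notation S := (dom M).
Variable g : K -> K -> K.
Hypothesis g_graph : forall x y, S x -> S y -> M (x, y, g x y).

Lemma pairing_fun_dom x y : S x -> S y -> S (g x y).
Proof. intros Sx Sy. exact (proj2 (proj2 (proj1 M_pairing x y _ (g_graph x y Sx Sy)))). Qed.

Lemma pairing_fun_inj x y x' y' :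
  S x -> S y -> S x' -> S y' -> g x y = g x' y' -> x = x' /\ y = y'.
Proof.
  intros Sx Sy Sx' Sy' E. apply (proj2 (proj2 (proj2 M_pairing)) x y (g x y)).
  - exact (g_graph x y Sx Sy).
  - rewrite E. exact (g_graph x' y' Sx' Sy').
Qed.

(* Given three distinct
   codes in S and an embedding [h] of S into its complement (with left inverse
   [r]), the graph extends to S' = S ∪ h(S): the three kinds of new pairs
   (S × h S, h S × S, h S × h S) are sent injectively into h(S) through the
   code and [g]. *)
Section Extension.
Variables c0 c1 c2 : K.
Hypotheses (c0_dom : S c0) (c1_dom : S c1) (c2_dom : S c2).
Hypotheses (c01 : c0 <> c1) (c02 : c0 <> c2) (c12 : c1 <> c2).
Variables h r : K -> K.
Hypothesis h_out : forall s, S s -> ~ S (h s).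
Hypothesis r_h : forall s, S s -> r (h s) = s.

Definition ext_dom (x : K) : Prop := S x \/ exists s, S s /\ h s = x.

Definition retract (x : K) : K :=
  if excluded_middle_informative (S x) then x else r x.

Definition code (x y : K) : K :=
  if excluded_middle_informative (S x) then c0
  else if excluded_middle_informative (S y) then c1 else c2.

Definition ext_value (x y : K) : K := h (g (code x y) (g (retract x) (retract y))).

Definition new_pair (x y : K) : Prop := ext_dom x /\ ext_dom y /\ ~ (S x /\ S y).

Definition ext_graph : K * K * K -> Prop :=
  fun '(x, y, z) => M (x, y, z) \/ (new_pair x y /\ z = ext_value x y).

Lemma retract_dom x : ext_dom x -> S (retract x).
Proof.
  unfold retract. destruct (excluded_middle_informative (S x)) as [Sx | nSx]; [auto |].
  intros [Sx | [s [Ss <-]]]; [contradiction | rewrite r_h; exact Ss].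
Qed.

Lemma retract_inj x x' :
  ext_dom x -> ext_dom x' -> (S x <-> S x') -> retract x = retract x' -> x = x'.
Proof.
  unfold retract.
  destruct (excluded_middle_informative (S x)) as [Sx | nSx];
    destruct (excluded_middle_informative (S x')) as [Sx' | nSx']; try tauto.
  intros [? | [s [Ss <-]]] [? | [s' [Ss' <-]]] _; try contradiction.
  rewrite !r_h by assumption. intros ->. reflexivity.
Qed.

Lemma code_dom x y : S (code x y).
Proof.
  unfold code. destruct (excluded_middle_informative (S x)); [exact c0_dom |].
  destruct (excluded_middle_informative (S y)); assumption.
Qed.

Lemma code_inj x y x' y' :
  ~ (S x /\ S y) -> ~ (S x' /\ S y') -> code x y = code x' y' ->
  (S x <-> S x') /\ (S y <-> S y').
Proof.
  unfold code.
  destruct (excluded_middle_informative (S x)); destruct (excluded_middle_informative (S x'));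
  destruct (excluded_middle_informative (S y)); destruct (excluded_middle_informative (S y'));
  intros; first [tauto | exfalso; congruence].
Qed.

(* The new values are [h] of a point of S, hence outside S. *)
Lemma ext_value_dom x y : new_pair x y -> S (g (code x y) (g (retract x) (retract y))).
Proof.
  intros [Dx [Dy _]]. apply pairing_fun_dom; [apply code_dom |].
  apply pairing_fun_dom; apply retract_dom; assumption.
Qed.

Lemma ext_value_inj x y x' y' :
  new_pair x y -> new_pair x' y' -> ext_value x y = ext_value x' y' -> x = x' /\ y = y'.
Proof.
  intros Nxy Nxy' E.
  assert (Eg : g (code x y) (g (retract x) (retract y)) =
               g (code x' y') (g (retract x') (retract y'))).
  { rewrite <- (r_h _ (ext_value_dom x y Nxy)), <- (r_h _ (ext_value_dom x' y' Nxy')).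
    exact (f_equal r E). }
  destruct Nxy as [Dx [Dy Nxy]]. destruct Nxy' as [Dx' [Dy' Nxy']].
  apply pairing_fun_inj in Eg as [Ec Er];
    try apply code_dom; try (apply pairing_fun_dom; apply retract_dom; assumption).
  apply pairing_fun_inj in Er as [Erx Ery]; try (apply retract_dom; assumption).
  destruct (code_inj x y x' y' Nxy Nxy' Ec) as [Sxx' Syy'].
  split; apply retract_inj; assumption.
Qed.

Lemma ext_graph_dom x : dom ext_graph x <-> ext_dom x.
Proof.
  split.
  - intros [z [Mz | [[Dx _] _]]]; [left; exists z; exact Mz | exact Dx].
  - intro Dx. destruct (classic (S x)) as [Sx | nSx].
    + exists (g x x). left. exact (g_graph x x Sx Sx).
    + exists (ext_value x x). right. split; [split; [| split] |]; tauto.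
Qed.

Lemma ext_graph_pairing : pairing_graph ext_graph.
Proof.
  destruct M_pairing as [M_dom [M_total [M_fun M_inj]]].
  split; [| split; [| split]].
  - intros x y z Exyz. rewrite !ext_graph_dom. destruct Exyz as [Mxyz | [Nxy ->]].
    + destruct (M_dom x y z Mxyz) as [Sx [Sy Sz]]. unfold ext_dom. tauto.
    + split; [| split]; [exact (proj1 Nxy) | exact (proj1 (proj2 Nxy)) |].
      right. exists (g (code x y) (g (retract x) (retract y))).
      split; [exact (ext_value_dom x y Nxy) | reflexivity].
  - intros x y Dx Dy. rewrite ext_graph_dom in Dx, Dy.
    destruct (classic (S x /\ S y)) as [[Sx Sy] | nSxy].
    + destruct (M_total x y Sx Sy) as [z Mz]. exists z. left. exact Mz.
    + exists (ext_value x y). right. split; [split; [| split] |]; auto.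
  - intros x y z z' [Mz | [[_ [_ nS]] ->]] [Mz' | [[_ [_ nS']] ->]].
    + exact (M_fun x y z z' Mz Mz').
    + exfalso. apply nS'. destruct (M_dom x y z Mz). tauto.
    + exfalso. apply nS. destruct (M_dom x y z' Mz'). tauto.
    + reflexivity.
  - intros x y z x' y' [Mz | [Nxy ->]] [Mz' | [Nxy' Ez]].
    + exact (M_inj x y z x' y' Mz Mz').
    + exfalso. apply (h_out _ (ext_value_dom x' y' Nxy')).
      fold (ext_value x' y'). rewrite <- Ez. exact (proj2 (proj2 (M_dom x y z Mz))).
    + exfalso. apply (h_out _ (ext_value_dom x y Nxy)).
      fold (ext_value x y). exact (proj2 (proj2 (M_dom x' y' _ Mz'))).
    + exact (ext_value_inj x y x' y' Nxy Nxy' Ez).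
Qed.

Lemma ext_graph_grows : incl M ext_graph /\ ~ incl ext_graph M.
Proof.
  split.
  - intros [[x y] z] Mz. left. exact Mz.
  - intro ext_M.
    assert (Dh : dom ext_graph (h c0)).
    { apply ext_graph_dom. right. exists c0. split; [exact c0_dom | reflexivity]. }
    destruct Dh as [z Ez]. apply (h_out c0 c0_dom). exists z. exact (ext_M _ Ez).
Qed.
End Extension.

Lemma maximal_pairing_graph_absorbs c0 c1 c2 :
  S c0 -> S c1 -> S c2 -> c0 <> c1 -> c0 <> c2 -> c1 <> c2 ->
  (forall M', pairing_graph M' -> incl M M' -> incl M' M) ->
  exists i, inj_into (fun x => ~ S x) S i.
Proof.
  intros Sc0 Sc1 Sc2 c01 c02 c12 M_max.
  destruct (card_comparable c0 c0 (fun x => ~ S x) S) as [absorbs | [h [h_out h_inj]]];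
    [exact absorbs | exfalso].
  destruct (left_inverse_on c0 S h h_inj) as [r r_h].
  destruct (ext_graph_grows c0 c1 c2 Sc0 h r h_out) as [grows strict].
  apply strict, M_max; [| exact grows].
  exact (ext_graph_pairing c0 c1 c2 Sc0 Sc1 Sc2 c01 c02 c12 h r h_out r_h).
Qed.

Lemma pairing_of_absorbing (i : K -> K) (c0 c1 : K) :
  S c0 -> S c1 -> c0 <> c1 -> inj_into (fun x => ~ S x) S i ->
  exists pk : K -> K -> K, forall a b c d, pk a b = pk c d -> a = c /\ b = d.
Proof.
  intros Sc0 Sc1 c01 [i_dom i_inj].
  set (j := fun x => if excluded_middle_informative (S x) then g c0 x else g c1 (i x)).
  assert (j_dom : forall x, S (j x)).
  { intro x. unfold j. destruct (excluded_middle_informative (S x)); apply pairing_fun_dom; auto. }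
  assert (j_inj : forall x y, j x = j y -> x = y).
  { intros x y. unfold j.
    destruct (excluded_middle_informative (S x)) as [Sx | nSx];
      destruct (excluded_middle_informative (S y)) as [Sy | nSy]; intro E;
      apply pairing_fun_inj in E as [Ec E]; auto;
      first [assumption | congruence | exact (i_inj x y nSx nSy E)]. }
  exists (fun a b => g (j a) (j b)). intros a b c d E.
  apply pairing_fun_inj in E as [Ea Eb]; auto.
Qed.
End PairingFunction.

Theorem infinite_pairing (K : Type) : infinite_type K ->
  exists pk : K -> K -> K, forall a b c d, pk a b = pk c d -> a = c /\ b = d.
Proof.
  intros [e e_inj].
  destruct (zorn_above (fun M => pairing_graph M /\ incl (nat_graph e) M) (nat_graph e))
    as [M [[M_pairing M_base] M_max]].
  - split; [exact (nat_graph_pairing e e_inj) | intros t Ht; exact Ht].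
  - intros C HC [M0 CM0] Cchain. split.
    + apply pairing_graph_chain_union; [intros M CM; exact (proj1 (HC M CM)) | exact Cchain].
    + intros t Ht. exists M0. split; [exact CM0 | exact (proj2 (HC M0 CM0) t Ht)].
  - assert (e_dom : forall n, dom M (e n)).
    { intro n. destruct (proj2 (nat_graph_dom e (e n)) (ex_intro _ n eq_refl)) as [z Hz].
      exists z. exact (M_base _ Hz). }
    assert (e_neq : forall m n, m <> n -> e m <> e n)
      by (intros m n mn E; exact (mn (e_inj m n E))).
    destruct (pairing_graph_fun M M_pairing) as [g g_graph].
    destruct (maximal_pairing_graph_absorbs M M_pairing g g_graph (e 0) (e 1) (e 2)
                (e_dom 0) (e_dom 1) (e_dom 2) (e_neq 0 1 ltac:(discriminate))
                (e_neq 0 2 ltac:(discriminate)) (e_neq 1 2 ltac:(discriminate)))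
      as [i absorbs].
    { intros M' M'_pairing MM'. apply M_max; [split; [exact M'_pairing |] | exact MM'].
      intros t Ht. exact (MM' _ (M_base t Ht)). }
    exact (pairing_of_absorbing M M_pairing g g_graph i (e 0) (e 1)
             (e_dom 0) (e_dom 1) (e_neq 0 1 ltac:(discriminate)) absorbs).
Qed.

Lemma card_le_subset {X K} (P P' : X -> Prop) :
  (forall x, P x -> P' x) -> card_le P' K -> card_le P K.
Proof. intros PP' [f f_inj]. exists f. intros x y Px Py. apply f_inj; auto. Qed.

Lemma countable_card_le {X K} (e : nat -> K) (P : X -> Prop) :
  (forall m n, e m = e n -> m = n) -> countable_set P -> card_le P K.
Proof.
  intros e_inj [c c_inj]. exists (fun x => e (c x)).
  intros x y Px Py E. exact (c_inj x y Px Py (e_inj _ _ E)).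
Qed.

Lemma card_le_fibered {X I K} (pk : K -> K -> K) (P : X -> Prop) (Q : I -> Prop) (idx : X -> I) :
  (forall a b c d, pk a b = pk c d -> a = c /\ b = d) ->
  card_le Q K -> (forall x, P x -> Q (idx x)) ->
  (forall i, Q i -> card_le (fun x => P x /\ idx x = i) K) ->
  card_le P K.
Proof.
  intros pk_inj [fQ fQ_inj] idx_Q fibres.
  destruct (choice_on Q (fun i f => inj_on (fun x => P x /\ idx x = i) f) (fun i _ => fQ i) fibres)
    as [phi phi_inj].
  exists (fun x => pk (fQ (idx x)) (phi (idx x) x)).
  intros x y Px Py E. apply pk_inj in E as [Ei E].
  apply fQ_inj in Ei; [| apply idx_Q; assumption ..].
  rewrite <- Ei in E. apply (phi_inj (idx x) (idx_Q x Px)); [| | exact E]; split; auto.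
Qed.

Lemma le_aleph1_closed_segments {X} (F : X -> Prop) : le_aleph1 F ->
  exists R : X -> X -> Prop,
    (forall x y, F x -> F y -> R x y \/ x = y \/ R y x) /\
    (forall s, F s -> countable_set (fun t => F t /\ (R t s \/ t = s))).
Proof.
  intros [R [_ [_ [R_total [_ R_segments]]]]]. exists R. split; [exact R_total |].
  intros s Fs. destruct (R_segments s Fs) as [c c_inj].
  exists (fun t => if excluded_middle_informative (t = s) then 0 else S (c t)).
  intros t t' [Ft Rt] [Ft' Rt'].
  destruct (excluded_middle_informative (t = s)) as [ts | ts];
    destruct (excluded_middle_informative (t' = s)) as [t's | t's];
    intro E; try discriminate; [congruence |].
  injection E as E. apply c_inj; [| | exact E]; split; auto;
    [destruct Rt | destruct Rt']; tauto.
Qed.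

(* ℵ₁ ≤ κ for uncountable κ: unless F embeds into K, an embedding of K into F
   is cofinal (else K would sit in a countable segment), so F is a union of
   K-many countable segments. *)
Theorem aleph1_card_le {X K} (e : nat -> K) (pk : K -> K -> K) (F : X -> Prop) :
  (forall m n, e m = e n -> m = n) ->
  (forall a b c d, pk a b = pk c d -> a = c /\ b = d) ->
  ~ countable_set (fun _ : K => True) ->
  le_aleph1 F -> card_le F K.
Proof.
  intros e_inj pk_inj K_unc F_aleph1.
  destruct (classic (exists x0, F x0)) as [[x0 Fx0] | F_empty].
  2:{ exists (fun _ => e 0). intros x y Fx; exfalso; eauto. }
  destruct (le_aleph1_closed_segments F F_aleph1) as [R [R_total R_segments]].
  destruct (card_comparable x0 (e 0) F (fun _ : K => True)) as [[f [_ f_inj]] | [j [j_F j_inj]]].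
  { exists f. exact f_inj. }
  assert (j_cofinal : forall x, F x -> exists k, R x (j k) \/ x = j k).
  { intros x Fx. apply NNPP; intro no_k. apply K_unc.
    assert (below : forall k, F (j k) /\ (R (j k) x \/ j k = x)).
    { intro k. split; [exact (j_F k I) |].
      destruct (R_total _ _ (j_F k I) Fx) as [? | [? | ?]]; auto.
      exfalso. apply no_k. eauto. }
    destruct (R_segments x Fx) as [c c_inj]. exists (fun k => c (j k)).
    intros k k' _ _ E. exact (j_inj k k' I I (c_inj _ _ (below k) (below k') E)). }
  destruct (choice_on F (fun x k => R x (j k) \/ x = j k) (fun _ => e 0) j_cofinal)
    as [kf kf_spec].
  apply (card_le_fibered pk F (fun _ : K => True) kf pk_inj); [| auto |].
  - exists (fun k => k). auto.
  - intros k _. apply (card_le_subset _ (fun t => F t /\ (R t (j k) \/ t = j k))).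
    + intros x [Fx <-]. split; [exact Fx | exact (kf_spec x Fx)].
    + exact (countable_card_le e _ e_inj (R_segments _ (j_F k I))).
Qed.

Section Spaces.
Context {X : Type} (T : topology X).

Lemma open_ext (U V : X -> Prop) : open T U -> (forall x, U x <-> V x) -> open T V.
Proof. intros HU E. replace V with U; [exact HU |]. apply set_ext; intro x; apply E. Qed.

Lemma closed_discrete_compl_dense (D : X -> Prop) :
  crowded T -> closed_discrete T D -> dense T (fun x => ~ D x).
Proof.
  intros T_crowded [_ D_discrete] U HU [x Ux]. apply NNPP; intro U_in_D.
  assert (UD : forall y, U y -> D y) by (intros y Uy; apply NNPP; eauto).
  destruct (D_discrete x (UD x Ux)) as [V [HV Vx]].
  apply (T_crowded x). unfold isolated.
  apply (open_ext (fun y => U y /\ V y)); [apply open_inter; assumption |].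
  intro y; split.
  - intros [Uy Vy]. apply Vx. auto.
  - intros ->. split; [exact Ux | apply (proj2 (Vx x)); reflexivity].
Qed.

Lemma closure_compl_open (A : X -> Prop) : open T (fun x => ~ closure T A x).
Proof.
  apply (open_ext (fun x => exists U, (open T U /\ forall y, U y -> ~ A y) /\ U x)).
  - apply open_union. intros U [HU _]. exact HU.
  - intro x. split.
    + intros [U [[HU UA] Ux]] Hcl. destruct (Hcl U HU Ux) as [y [Uy Ay]]. exact (UA y Uy Ay).
    + intro not_cl. unfold closure in not_cl.
      apply not_all_ex_not in not_cl as [U HU].
      apply imply_to_and in HU as [HU HU']. apply imply_to_and in HU' as [Ux noA].
      exists U. split; [split; [exact HU |] | exact Ux].
      intros y Uy Ay. apply noA. eauto.
Qed.

Lemma closed_discrete_inter_closed (D C : X -> Prop) :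
  closed_discrete T D -> closed T C -> closed_discrete T (fun x => D x /\ C x).
Proof.
  intros [D_closed D_discrete] C_closed. split.
  - unfold closed.
    apply (open_ext (fun x => exists U, (U = (fun x => ~ D x) \/ U = (fun x => ~ C x)) /\ U x)).
    + apply open_union. intros U [-> | ->]; assumption.
    + intro x. split.
      * intros [U [[-> | ->] Ux]]; tauto.
      * intro nDC. apply not_and_or in nDC as [nD | nC].
        -- exists (fun x => ~ D x). auto.
        -- exists (fun x => ~ C x). auto.
  - intros x [Dx Cx]. destruct (D_discrete x Dx) as [U [HU Ux]]. exists U. split; [exact HU |].
    intro y. split.
    + intros [Uy [Dy _]]. apply Ux. auto.
    + intros ->. split; [apply (proj2 (Ux x)); reflexivity | auto].
Qed.

(* A nonempty crowded Baire space is not a countable union of closed discrete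
   sets: the complements would be dense open sets with empty intersection. *)
Lemma dis_star_uncountable (K : Type) :
  inhabited X -> crowded T -> baire T -> dis_star_le T K -> ~ countable_set (fun _ : K => True).
Proof.
  intros [x0] T_crowded T_baire [C [C_cd C_cover]] [j j_inj].
  set (G := fun n x => forall k, j k = n -> ~ C k x).
  assert (G_open_dense : forall n, open T (G n) /\ dense T (G n)).
  { intro n. destruct (classic (exists k, j k = n)) as [[k0 Hk0] | no_k].
    - assert (E : forall x, ~ C k0 x <-> G n x).
      { intro x; split.
        - intros nC k Hk. replace k with k0; [exact nC |]. apply j_inj; auto. congruence.
        - intro Gx. exact (Gx k0 Hk0). }
      split; [exact (open_ext _ _ (proj1 (C_cd k0)) E) |].
      intros U HU HUn.
      destruct (closed_discrete_compl_dense _ T_crowded (C_cd k0) U HU HUn) as [y [Uy nCy]].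
      exists y. split; [exact Uy | apply E; exact nCy].
    - assert (E : forall x, True <-> G n x).
      { intro x; split; [| auto]. intros _ k Hk. exfalso. apply no_k. eauto. }
      split; [exact (open_ext _ _ (open_full T) E) |].
      intros U HU [y Uy]. exists y. split; [exact Uy | apply E; exact I]. }
  destruct (T_baire G (fun n => proj1 (G_open_dense n)) (fun n => proj2 (G_open_dense n))
              (fun _ => True) (open_full T) (ex_intro _ x0 I)) as [y [_ Gy]].
  destruct (C_cover y) as [k Cky]. exact (Gy (j k) k eq_refl Cky).
Qed.

(* Each of its points d is sent to a point
   of A in the expansion U_d, and each fibre lies in the ≤ ℵ₁ sets U_d
   containing a given point. *)
Lemma closed_discrete_in_closure_card_le {K} (e : nat -> K) (pk : K -> K -> K)
  (A D : X -> Prop) :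
  (forall m n, e m = e n -> m = n) ->
  (forall a b c d, pk a b = pk c d -> a = c /\ b = d) ->
  ~ countable_set (fun _ : K => True) ->
  omega1_expandable T -> card_le A K ->
  closed_discrete T D -> (forall d, D d -> closure T A d) ->
  card_le D K.
Proof.
  intros e_inj pk_inj K_unc T_exp A_le D_cd D_cl.
  destruct (T_exp D D_cd) as [U [U_sep U_ord]].
  destruct (choice_on D (fun d a => A a /\ U d a) (fun d => d)) as [pt pt_spec].
  { intros d Dd. destruct (U_sep d Dd) as [HU Ud].
    destruct (D_cl d Dd (U d) HU (proj1 (proj2 (Ud d) eq_refl))) as [a [Uda Aa]].
    exists a. split; assumption. }
  apply (card_le_fibered pk D A pt pk_inj A_le); [intros d Dd; apply pt_spec, Dd |].
  intros a _. apply (card_le_subset _ (fun d => D d /\ U d a)).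
  - intros d [Dd <-]. split; [exact Dd | apply pt_spec, Dd].
  - exact (aleph1_card_le e pk _ e_inj pk_inj K_unc (U_ord a)).
Qed.
End Spaces.

Theorem mainTheorem5 (K : Type) (HK : infinite_type K)
  (X : Type) (T : topology X)
  (Hhaus : hausdorff T) (Hcrowd : crowded T) (Hbaire : baire T)
  (Hexp : omega1_expandable T) (Hdis : dis_star_le T K)
  (A : X -> Prop) (HA : card_le A K) :
  card_le (closure T A) K.
Proof.
  destruct (infinite_pairing K HK) as [pk pk_inj].
  destruct HK as [e e_inj].
  destruct (classic (inhabited X)) as [X_inh | X_empty].
  2:{ exists (fun _ => e 0). intros x. exfalso. exact (X_empty (inhabits x)). }
  assert (K_unc := dis_star_uncountable T K X_inh Hcrowd Hbaire Hdis).
  destruct Hdis as [C [C_cd C_cover]].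
  destruct (choice (fun x k => C k x) C_cover) as [piece_of piece_spec].
  (* cl(A) is the union over k ∈ K of the closed discrete sets C_k ∩ cl(A). *)
  apply (card_le_fibered pk _ (fun _ : K => True) piece_of pk_inj); [| auto |].
  - exists (fun k => k). auto.
  - intros k _. apply (card_le_subset _ (fun x => C k x /\ closure T A x)).
    + intros x [Ax <-]. split; [apply piece_spec | exact Ax].
    + apply (closed_discrete_in_closure_card_le T e pk A); try assumption.
      * apply closed_discrete_inter_closed; [exact (C_cd k) | apply closure_compl_open].
      * intros x [_ Ax]. exact Ax.
Qed.
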